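(* Let $G=(V,E)$ be a connected undirected graph with positive edge weights $w$, and run the distributed algorithm described in the context synchronously at every node. Then for every node $v\in V$ and every node $t\in V$: at any time after the first $\mathrm{maxhop}(v,t)+1$ phases have been completed, the variable $\mathrm{NH}[t]$ at $v$ equals $\mathsf{NH}_v(t)$; and at any time after the first $\mathcal{D}(G)+2$ phases have been completed, the variable $\mathrm{PH}[t]$ at $v$ equals $\mathsf{PH}_v(t)$.
   Context: Graph notions. $G=(V,E)$ is connected, undirected, with weights $w(e)>0$; $N(v)$ is the set of neighbors of $v$ and $N[v]=N(v)\cup\{v\}$. The length of a path is the sum of its edge weights; $\mathrm{dist}(s,t)$ is the length of a shortest $s$–$t$ path. For $s\neq t$, $\mathrm{maxhop}(s,t)$ is the maximum number of edges of a shortest (minimum-length) $s$–$t$ path, $\mathrm{maxhop}(s,s)=0$, and $\mathcal{D}(G)=\max_{s,t\in V}\mathrm{maxhop}(s,t)$. $\mathsf{NH}_v(t)$ is the set of neighbors of $v$ that lie on some shortest path from $v$ to $t$; $\mathsf{PH}_v(s)$ is the set of neighbors $u$ of $v$ such that $v$ lies on some shortest path from $s$ to $u$. Algorithm (at each node $v$). Initialization: for all $t\in V$: $D[t]=+\infty$, $\mathrm{NH}[t]=\mathrm{PH}[t]=\emptyset$, and for all $u\in N[v]$: $B[u,t]=0$, $S[u,t]=0$; then $S[v,v]=1$, $D[v]=0$. Execution proceeds in synchronous phases; in each phase every node $v$ sends, for every $t\in V$, the message $(t,D[t],S[v,t],B[v,t])$ to every neighbor, receives all messages sent to it by its neighbors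 in that phase, and processes each of them (in arbitrary order) as follows. On receipt of $(t,d,s,b)$ from $u\in N(v)$: remove $u$ from $\mathrm{NH}[t]$ and from $\mathrm{PH}[t]$; if $d+w(\{u,v\})<D[t]$ set $D[t]\leftarrow d+w(\{u,v\})$; else if $d+w(\{u,v\})=D[t]$ add $u$ to $\mathrm{NH}[t]$; else if $d-w(\{u,v\})=D[t]$ add $u$ to $\mathrm{PH}[t]$. Then set $S[u,t]\leftarrow s$, $B[u,t]\leftarrow b$; if $t\neq v$ set $S[v,t]\leftarrow\sum_{x\in\mathrm{NH}[t]}S[x,t]$; set $B[v,t]\leftarrow S[v,t]\cdot\sum_{x\in\mathrm{PH}[t]}\frac{B[x,t]+1}{S[x,t]}$ (a term with $S[x,t]=0$ is taken as $0$); finally set $C\leftarrow\sum_{x\neq v}B[v,x]$. *)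

From HB Require Import structures.
From mathcomp Require Import all_boot all_order all_algebra.
From Stdlib Require Import ClassicalEpsilon.
Set Implicit Arguments. Unset Strict Implicit. Unset Printing Implicit Defensive.
Import Order.TTheory GRing.Theory Num.Theory.
Local Open Scope ring_scope.

Definition pdec (P : Prop) : bool :=
  if excluded_middle_informative P then true else false.

Section Algo.
Variables (R : realFieldType) (V : finType) (e : rel V) (w : V -> V -> R).

Fixpoint plen (x : V) (p : seq V) : R :=
  if p is y :: p' then w x y + plen y p' else 0.

(* p is (the tail of) a walk s = x_0, x_1, ..., x_k = t, i.e. p = [x_1; ...; x_k] *)
Definition walk (s t : V) (p : seq V) : Prop := path e s p /\ last s p = t.

Definition shortest (s t : V) (p : seq V) : Prop :=
  walk s t p /\ forall q, walk s t q -> plen s p <= plen s q.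

(* maxhop s t: maximal number of edges of a shortest s-t path (0 if s = t).
   Shortest walks are simple (positive weights) so they have < #|V| edges. *)
Definition maxhop (s t : V) : nat :=
  if s == t then 0%N else
  \max_(k < #|V|) (if pdec (exists p, shortest s t p /\ size p = k) then (k : nat) else 0%N).

Definition DG : nat := \max_(s : V) \max_(t : V) maxhop s t.

Definition NHset (v t : V) : {set V} :=
  [set u | e v u && pdec (exists p, shortest v t (u :: p))].

Definition PHset (v s : V) : {set V} :=
  [set u | e v u && pdec (exists q, shortest s u (rcons q u) /\ last s q = v)].

(* distances in R extended with +oo, represented by None *)
Definition oadd (d : option R) (x : R) : option R := omap (fun y => y + x) d.
Definition osub (d : option R) (x : R) : option R := omap (fun y => y - x) d.
Definition olt (a b : option R) : bool :=
  match a, b with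
  | Some x, Some y => x < y
  | Some _, None => true
  | None, _ => false
  end.

Record nstate := NState {
  sD  : V -> option R;
  sNH : V -> {set V};
  sPH : V -> {set V};
  sS  : V -> V -> R;
  sB  : V -> V -> R;
  sC  : R
}.

Definition upd {T : Type} (f : V -> T) (t : V) (x : T) : V -> T :=
  fun t' => if t' == t then x else f t'.
Definition upd2 (f : V -> V -> R) (u t : V) (x : R) : V -> V -> R :=
  fun u' t' => if (u' == u) && (t' == t) then x else f u' t'.

Definition proc (v u t : V) (m : option R * R * R) (ns : nstate) : nstate :=
  let: (d, s, b) := m in
  let wuv := w u v in
  let D := sD ns t in
  let NH0 := sNH ns t :\ u in
  let PH0 := sPH ns t :\ u in
  let: (D', NH1, PH1) :=
    if olt (oadd d wuv) D then (oadd d wuv, NH0, PH0)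
    else if oadd d wuv == D then (D, u |: NH0, PH0)
    else if osub d wuv == D then (D, NH0, u |: PH0)
    else (D, NH0, PH0) in
  let S1 := upd2 (sS ns) u t s in
  let B1 := upd2 (sB ns) u t b in
  let Svt := if t != v then \sum_(x in NH1) S1 x t else S1 v t in
  let S2 := upd2 S1 v t Svt in
  let Bvt := Svt * \sum_(x in PH1)
                     (if S2 x t == 0 then 0 else (B1 x t + 1) / S2 x t) in
  let B2 := upd2 B1 v t Bvt in
  NState (upd (sD ns) t D') (upd (sNH ns) t NH1) (upd (sPH ns) t PH1)
         S2 B2 (\sum_(x | x != v) B2 v x).

Definition init (v : V) : nstate :=
  NState (fun t => if t == v then Some 0 else None) (fun _ => set0) (fun _ => set0)
         (fun u t => if (u == v) && (t == v) then 1 else 0) (fun _ _ => 0) 0.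

Definition msgs (v : V) : seq (V * V) := [seq (u, t) | u <- enum (e v), t <- enum V].

(* message (t, D[t], S[u,t], B[u,t]) sent by u, read from u's state at phase start *)
Definition msg (st : V -> nstate) (u t : V) : option R * R * R :=
  (sD (st u) t, sS (st u) u t, sB (st u) u t).

Variable sched : nat -> V -> seq (V * V).
(* sched n v: the (arbitrary) order in which v processes, in phase n (0-based),
   the messages (u, t) of that phase *)

Definition process (st : V -> nstate) (v : V) (ms : seq (V * V)) (ns : nstate) : nstate :=
  foldl (fun ns ut => proc v ut.1 ut.2 (msg st ut.1 ut.2) ns) ns ms.

Fixpoint run (n : nat) : V -> nstate :=
  if n is n'.+1 then (fun v => process (run n') v (sched n' v) (run n' v))
  else init.

(* state of v after n completed phases and the first j receptions of phase n *)
Definition mid (n j : nat) (v : V) : nstate :=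
  process (run n) v (take j (sched n v)) (run n v).

End Algo.

(* The value D[t] held by a node x is always the length of some x-t walk, and
   after n phases it is at most the length of every x-t walk with at most n
   edges; so from phase maxhop(x,t) on it equals dist(x,t).  Once D[t] is final
   at v no message can lower it, and the message of a neighbour u then only
   decides whether u belongs to NH[t] (D_u[t] + w(u,v) = D_v[t]) or to PH[t]
   (D_u[t] - w(u,v) = D_v[t]).  A next hop u of v towards t reaches t along a
   shortest walk with fewer than maxhop(v,t) edges, so D_u[t] is exact when v
   reads it, which gives NH after maxhop(v,t) + 1 phases.  Since u is in PH_v(t)
   iff v is in NH_u(t), i.e. iff dist(u,t) = w(u,v) + dist(v,t), PH is right as
   soon as all distances are final: after D(G) + 1 phases. *)

From HB Require Import structures.
From mathcomp Require Import all_boot all_order all_algebra.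
From Stdlib Require Import ClassicalEpsilon.
Set Implicit Arguments. Unset Strict Implicit. Unset Printing Implicit Defensive.
Import Order.TTheory GRing.Theory Num.Theory.
Local Open Scope ring_scope.

Lemma pdecP (P : Prop) : reflect P (pdec P).
Proof. by rewrite /pdec; case: excluded_middle_informative => H; constructor. Qed.

Section Walks.
Variables (R : realFieldType) (V : finType) (e : rel V) (w : V -> V -> R).
Hypotheses (e_sym : symmetric e) (w_gt0 : forall u v, e u v -> 0 < w u v)
  (w_sym : forall u v, w u v = w v u).

Lemma plen_cat x p q : plen w x (p ++ q) = plen w x p + plen w (last x p) q.
Proof. by elim: p x => [|y p IH] x /=; rewrite ?add0r // IH addrA. Qed.

Lemma plen_ge0 x p : path e x p -> 0 <= plen w x p.
Proof.
elim: p x => //= y p IH x /andP[exy pp].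
by rewrite addr_ge0 ?IH // ltW ?w_gt0.
Qed.

Lemma walk_cons x u t p : e x u -> walk e u t p -> walk e x t (u :: p).
Proof. by move=> exu [pp lp]; split => //=; rewrite exu. Qed.

Lemma walk_behead x u t p : walk e x t (u :: p) -> walk e u t p.
Proof. by case=> /= /andP[_ pp] lp. Qed.

Lemma last_rev_belast (x : V) p : last (last x p) (rev (belast x p)) = x.
Proof. by case: p => // z p; rewrite /= rev_cons last_rcons. Qed.

Lemma plen_rev x p : plen w (last x p) (rev (belast x p)) = plen w x p.
Proof.
elim: p x => [|y p IH] x //=.
by rewrite rev_cons -cats1 plen_cat /= last_rev_belast IH addr0 addrC w_sym.
Qed.

Lemma walk_rev x y p : walk e x y p -> walk e y x (rev (belast x p)).
Proof.
move=> [pp <-]; split; last exact: last_rev_belast.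
by rewrite rev_path; apply: sub_path pp => a b; rewrite e_sym.
Qed.

Lemma shortest_rev x y p : shortest e w x y p -> shortest e w y x (rev (belast x p)).
Proof.
move=> [wp sp]; split=> [|q wq]; first exact: walk_rev.
have [[_ lp] [_ lq]] := (wp, wq).
rewrite -[in X in _ <= X](plen_rev y q) lq -[y in plen w y _]lp plen_rev.
exact/sp/walk_rev.
Qed.

Lemma shortest_len x y p q : shortest e w x y p -> shortest e w x y q ->
  plen w x p = plen w x q.
Proof. by move=> [wp sp] [wq sq]; apply/le_anti; rewrite sp // sq //. Qed.

Lemma shortest_behead x u t p : shortest e w x t (u :: p) -> shortest e w u t p.
Proof.
move=> [wp sp]; split=> [|q wq]; first exact: walk_behead wp.
case: wp => /= /andP[exu _] _.
by have := sp _ (walk_cons exu wq); rewrite /= lerD2l.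
Qed.

Lemma shortest_refl x p : shortest e w x x p -> p = [::].
Proof.
case: p => // u p [[/= /andP[exu pp] _] sp].
have := sp [::] (conj isT erefl); rewrite /= leNgt => /negP; case.
by rewrite ltr_pwDl ?w_gt0 ?plen_ge0.
Qed.

Lemma walk_shorten x p : path e x p -> ~~ uniq (x :: p) ->
  exists2 p', path e x p' /\ last x p' = last x p &
              (size p' < size p)%N /\ plen w x p' < plen w x p.
Proof.
elim: p x => [|y p IH] x // pp.
rewrite [uniq _]/= negb_and negbK => /orP[xin|nu].
  move: pp; case/splitPr: xin => p1 p2.
  rewrite cat_path => /andP[pp1 /= /andP[ex pp2]].
  exists p2; split => //; first by rewrite last_cat.
    by rewrite size_cat /= addnS ltnS leq_addl.
  by rewrite plen_cat /= addrA ltrDr ltr_wpDl ?plen_ge0 ?w_gt0.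
case/andP: pp => exy pp; have [p' [pp' lp'] [sp' lenp']] := IH y pp nu.
by exists (y :: p'); split; rewrite /= ?exy ?ltrD2l.
Qed.

Lemma long_walk_not_uniq (x : V) p : (#|V| <= size p)%N -> ~~ uniq (x :: p).
Proof.
move=> hs; apply/negP => /card_uniqP hc.
by have := max_card (mem (x :: p)); rewrite hc /= ltnNge hs.
Qed.

Lemma walk_reduce x y p : walk e x y p ->
  exists2 p', walk e x y p' & (size p' < #|V|)%N /\ plen w x p' <= plen w x p.
Proof.
have [n] := ubnP (size p); elim: n p => // n IH p szp [pp lp].
case: (ltnP (size p) #|V|) => hs; first by exists p.
have [p1 [pp1 l1] [s1 len1]] := walk_shorten pp (long_walk_not_uniq x hs).
have [p2 wp2 [s2 len2]] := IH p1 (leq_trans s1 (ltnSE szp)) (conj pp1 (etrans l1 lp)).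
by exists p2 => //; split => //; apply: le_trans len2 (ltW len1).
Qed.

Lemma shortest_size x y p : shortest e w x y p -> (size p < #|V|)%N.
Proof.
move=> [[pp lp] sp]; rewrite ltnNge; apply/negP => hs.
have [p1 [pp1 l1] [_ len1]] := walk_shorten pp (long_walk_not_uniq x hs).
by have := sp p1 (conj pp1 (etrans l1 lp)); rewrite leNgt len1.
Qed.

Lemma shortest_size_maxhop x y p : shortest e w x y p -> (size p <= maxhop e w x y)%N.
Proof.
move=> sh; case: (eqVneq x y) => [exy|nxy].
  by move: sh; rewrite -exy => /shortest_refl ->.
rewrite /maxhop (negbTE nxy).
apply: leq_trans (leq_bigmax_cond (Ordinal (shortest_size sh)) isT).
by case: pdecP => //= -[]; exists p.
Qed.

Lemma maxhop_le_DG x y : (maxhop e w x y <= DG e w)%N.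
Proof.
apply: leq_trans (leq_bigmax_cond x isT).
exact: (leq_bigmax_cond y isT).
Qed.

Lemma shortest_consP u v t pu pv : e u v ->
  shortest e w u t pu -> shortest e w v t pv ->
  reflect (exists p, shortest e w u t (v :: p)) (plen w u pu == w u v + plen w v pv).
Proof.
move=> euv su sv; apply: (iffP eqP) => [hu | [p sp]].
  exists pv; split=> [|q wq]; first exact: walk_cons (proj1 sv).
  by rewrite /= -hu; apply: (proj2 su).
by rewrite (shortest_len su sp) /= (shortest_len (shortest_behead sp) sv).
Qed.

Lemma PHset_NHset u v t : (u \in PHset e w v t) = (v \in NHset e w u t).
Proof.
rewrite !inE e_sym; case: (e u v) => //=.
apply/pdecP/pdecP => [[q [sq lq]] | [p sp]].
  have := shortest_rev sq; rewrite belast_rcons lastI lq rev_rcons.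
  by exists (rev (belast t q)).
exists (rev (belast v p)); split.
  by have := shortest_rev sp; rewrite /= rev_cons.
by case: sp => -[_ /= lp] _; rewrite -lp last_rev_belast.
Qed.

End Walks.

Section OptionOrder.
Variable R : realFieldType.

Definition ole (a b : option R) : bool := ~~ olt b a.

Lemma ole_refl (a : option R) : ole a a.
Proof. by rewrite /ole; case: a => //= x; rewrite ltxx. Qed.

Lemma ole_trans (a b c : option R) : ole a b -> ole b c -> ole a c.
Proof.
rewrite /ole; case: c => [z|] //; case: b => [y|] //; case: a => [x|] //=.
by rewrite -!leNgt; apply: le_trans.
Qed.

Lemma olt_ole (a b : option R) : olt a b -> ole a b.
Proof. by rewrite /ole; case: a => [x|]; case: b => [y|] //= /ltW; rewrite leNgt. Qed.

Lemma oleD2r (a b : option R) c : ole (oadd a c) (oadd b c) = ole a b.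
Proof. by rewrite /ole; case: b => [y|]; case: a => [x|] //=; rewrite ltrD2r. Qed.

End OptionOrder.

Section Processing.
Variables (R : realFieldType) (V : finType) (w : V -> V -> R).

Definition cand (v u : V) (d : option R) := oadd d (w u v).

Lemma proc_D v u t' (m : option R * R * R) ns t :
  sD (proc w v u t' m ns) t =
  if t == t' then (if olt (cand v u m.1.1) (sD ns t) then cand v u m.1.1 else sD ns t)
  else sD ns t.
Proof.
case: m => [[d s] b]; rewrite /proc /cand /=.
case: ifP => h1; [|case: ifP => h2; [|case: ifP => h3]];
by rewrite /upd /=; case: eqP => // ->; rewrite ?h1 ?h2 ?h3.
Qed.

Lemma proc_NH v u t' (m : option R * R * R) ns t :
  sNH (proc w v u t' m ns) t =
  if t == t' then
    (if olt (cand v u m.1.1) (sD ns t) then sNH ns t :\ u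
     else if cand v u m.1.1 == sD ns t then u |: (sNH ns t :\ u) else sNH ns t :\ u)
  else sNH ns t.
Proof.
case: m => [[d s] b]; rewrite /proc /cand /=.
case: ifP => h1; [|case: ifP => h2; [|case: ifP => h3]];
by rewrite /upd /=; case: eqP => // ->; rewrite ?h1 ?h2 ?h3.
Qed.

Lemma proc_PH v u t' (m : option R * R * R) ns t :
  sPH (proc w v u t' m ns) t =
  if t == t' then
    (if olt (cand v u m.1.1) (sD ns t) then sPH ns t :\ u
     else if cand v u m.1.1 == sD ns t then sPH ns t :\ u
     else if osub m.1.1 (w u v) == sD ns t then u |: (sPH ns t :\ u) else sPH ns t :\ u)
  else sPH ns t.
Proof.
case: m => [[d s] b]; rewrite /proc /cand /=.
case: ifP => h1; [|case: ifP => h2; [|case: ifP => h3]];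
by rewrite /upd /=; case: eqP => // ->; rewrite ?h1 ?h2 ?h3.
Qed.

Lemma proc_D_le v u t' m ns t : ole (sD (proc w v u t' m ns) t) (sD ns t).
Proof.
rewrite proc_D; case: eqP => _; last exact: ole_refl.
by case: ifP => h; [exact: olt_ole | exact: ole_refl].
Qed.

Lemma proc_D_le_cand v u m ns t : ole (sD (proc w v u t m ns) t) (cand v u m.1.1).
Proof. by rewrite proc_D eqxx; case: ifP => h; rewrite ?ole_refl // /ole h. Qed.

Lemma proc_subset v u t' m ns t :
  (sNH (proc w v u t' m ns) t \subset u |: sNH ns t) &&
  (sPH (proc w v u t' m ns) t \subset u |: sPH ns t).
Proof.
rewrite proc_NH proc_PH; case: eqP => _; last by rewrite !subsetU1.
by apply/andP; split; repeat case: ifP => _;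
  rewrite ?setUS ?subsetU1 // (subset_trans (subD1set _ _)) ?subsetU1.
Qed.

Lemma proc_stable v u t' m ns t dv : sD ns t = Some dv ->
    (t' = t -> ole (Some dv) (cand v u m.1.1)) ->
  [/\ sD (proc w v u t' m ns) t = Some dv,
      forall x, (x \in sNH (proc w v u t' m ns) t) =
        if (x, t) == (u, t') then cand v u m.1.1 == Some dv else x \in sNH ns t &
      forall x, (x \in sPH (proc w v u t' m ns) t) =
        if (x, t) == (u, t') then
          (cand v u m.1.1 != Some dv) && (osub m.1.1 (w u v) == Some dv)
        else x \in sPH ns t].
Proof.
move=> hD hc; rewrite proc_D hD.
case: (eqVneq t t') => [ett|ntt]; last first.
  by split=> // x; rewrite ?proc_NH ?proc_PH xpair_eqE (negbTE ntt) andbF.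
subst t'; have /negbTE nlt := hc erefl; rewrite nlt.
split=> // x; rewrite ?proc_NH ?proc_PH eqxx hD nlt xpair_eqE eqxx andbT.
all: by case: (eqVneq x u) => [->|/negbTE nxu]; repeat case: ifP => /= _;
  rewrite !inE ?eqxx ?nxu.
Qed.

Lemma process_cons st v m ms ns : process w st v (m :: ms) ns =
  process w st v ms (proc w v m.1 m.2 (msg st m.1 m.2) ns).
Proof. by []. Qed.

Lemma process_D_le st v ms ns t : ole (sD (process w st v ms ns) t) (sD ns t).
Proof.
elim: ms ns => [|m ms IH] ns; first exact: ole_refl.
by rewrite process_cons; apply: ole_trans (IH _) (proc_D_le _ _ _ _ _ _).
Qed.

Lemma process_D_le_cand st v ms ns u t : (u, t) \in ms ->
  ole (sD (process w st v ms ns) t) (cand v u (sD (st u) t)).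
Proof.
elim: ms ns => [|m ms IH] ns //; rewrite in_cons process_cons => /predU1P[<-|/IH //].
exact: ole_trans (process_D_le _ _ _ _ _) (proc_D_le_cand _ _ _ _ _).
Qed.

Lemma process_stable st v ms ns t dv : sD ns t = Some dv ->
    (forall u, (u, t) \in ms -> ole (Some dv) (cand v u (sD (st u) t))) ->
  [/\ sD (process w st v ms ns) t = Some dv,
      sNH (process w st v ms ns) t =
        [set x | if (x, t) \in ms then cand v x (sD (st x) t) == Some dv
                 else x \in sNH ns t] &
      sPH (process w st v ms ns) t =
        [set x | if (x, t) \in ms then
                   (cand v x (sD (st x) t) != Some dv) &&
                   (osub (sD (st x) t) (w x v) == Some dv)
                 else x \in sPH ns t]].
Proof.
elim: ms ns => [|[u t'] ms IH] ns hD hc.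
  by split=> //; apply/setP => x; rewrite inE.
have hc' u' : (u', t) \in ms -> ole (Some dv) (cand v u' (sD (st u') t)).
  by move=> h; apply: hc; rewrite in_cons h orbT.
have hu : t' = t -> ole (Some dv) (cand v u (msg st u t').1.1).
  by move=> ett; rewrite /= ett; apply: hc; rewrite ett mem_head.
have [hD' hNH hPH] := proc_stable hD hu.
rewrite process_cons; have [-> -> ->] := IH _ hD' hc'; split=> //; apply/setP => x.
  by rewrite !in_set hNH in_cons; case: (@eqP _ (x, t)) => [[-> ->]|_]; case: ifP.
by rewrite !in_set hPH in_cons; case: (@eqP _ (x, t)) => [[-> ->]|_]; case: ifP.
Qed.

End Processing.

Section Run.
Variables (R : realFieldType) (V : finType) (e : rel V) (w : V -> V -> R)
  (sched : nat -> V -> seq (V * V)).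
Hypotheses (e_sym : symmetric e) (connected : forall x y, connect e x y)
  (w_gt0 : forall u v, e u v -> 0 < w u v) (w_sym : forall u v, w u v = w v u)
  (sched_perm : forall n v, perm_eq (sched n v) (msgs e v)).

Local Notation nbrs v := [set u | e v u].

Lemma mem_sched n v u t : ((u, t) \in sched n v) = e v u.
Proof.
rewrite (perm_mem (sched_perm n v)); apply/allpairsP/idP => [[[a b] /= []]|evu].
  by rewrite mem_enum => + _ [-> _].
by exists (u, t); rewrite /= !mem_enum.
Qed.

Lemma sched_nbr n v m : m \in sched n v -> e v m.1.
Proof. by case: m => u t; rewrite mem_sched. Qed.

Lemma run_succ n v : run w sched n.+1 v =
  process w (run w sched n) v (sched n v) (run w sched n v).
Proof. by []. Qed.

Lemma run_succ_mid n v : run w sched n.+1 v = mid w sched n (size (sched n v)) v.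
Proof. by rewrite /mid take_size. Qed.

Lemma process_nbr st v ms ns t : (forall m, m \in ms -> e v m.1) ->
    (sNH ns t \subset nbrs v) && (sPH ns t \subset nbrs v) ->
  (sNH (process w st v ms ns) t \subset nbrs v) &&
  (sPH (process w st v ms ns) t \subset nbrs v).
Proof.
elim: ms ns => [|m ms IH] ns // hms /andP[hNH hPH]; rewrite process_cons.
have evu : e v m.1 by apply: hms; rewrite mem_head.
apply: IH => [m' hm'|]; first by apply: hms; rewrite in_cons hm' orbT.
have /andP[subNH subPH] := proc_subset w v m.1 m.2 (msg st m.1 m.2) ns t.
by rewrite !(subset_trans subNH, subset_trans subPH) // subUset sub1set inE evu.
Qed.

Lemma run_nbr n v t :
  (sNH (run w sched n v) t \subset nbrs v) && (sPH (run w sched n v) t \subset nbrs v).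
Proof.
elim: n v => [|n IH] v; first by rewrite !sub0set.
by rewrite run_succ; apply: process_nbr => // m; apply: sched_nbr.
Qed.

Variable t : V.

Definition realized x (D : option R) :=
  forall d, D = Some d -> exists2 p, walk e x t p & plen w x p = d.

Lemma process_realized st v ms ns : (forall u, realized u (sD (st u) t)) ->
    (forall m, m \in ms -> e v m.1) -> realized v (sD ns t) ->
  realized v (sD (process w st v ms ns) t).
Proof.
move=> hst; elim: ms ns => [|[u t'] ms IH] ns // hms hns.
have evu : e v u by apply: (hms (u, t')); rewrite mem_head.
rewrite process_cons; apply: IH => [m hm|]; first by apply: hms; rewrite in_cons hm orbT.
move=> d; rewrite proc_D; case: eqP => [<-|_]; last exact: hns.
case: ifP => _; last exact: hns.
rewrite /cand /=; case hD: (sD (st u) t) => [du|] //= [<-].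
have [p wp <-] := hst u du hD.
by exists (u :: p); [apply: walk_cons | rewrite /= addrC w_sym].
Qed.

Lemma run_realized n x : realized x (sD (run w sched n x) t).
Proof.
elim: n x => [|n IH] x.
  rewrite /= /init /=; case: (eqVneq x t) => [->|] // d [<-].
  by exists [::].
by rewrite run_succ; apply: process_realized => // m; apply: sched_nbr.
Qed.

Lemma run_D_le_walk n x q : walk e x t q -> (size q <= n)%N ->
  ole (sD (run w sched n x) t) (Some (plen w x q)).
Proof.
elim: n x q => [|n IH] x [|u q] wq //.
- by case: wq => _ /= ->; rewrite /= eqxx ole_refl.
- by move=> _; apply: ole_trans (process_D_le _ _ _ _ _ _) (IH x [::] wq _).
- rewrite ltnS => hs; have [/= /andP[exu pq] lq] := wq.
  apply: ole_trans (process_D_le_cand _ _ _ _ (_ : (u, t) \in sched n x)) _.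
    by rewrite mem_sched.
  have := IH u q (conj pq lq) hs; rewrite -(oleD2r _ _ (w u x)) /= => h.
  by rewrite /cand [w x u]w_sym addrC.
Qed.

(* Bellman-Ford: after #|V| phases D[t] at x is the length of a shortest walk. *)
Lemma exists_shortest x : exists p, shortest e w x t p.
Proof.
have [p0 pp0 lp0] := connectP (connected x t).
have [p1 wp1 [s1 _]] := walk_reduce w_gt0 (conj pp0 (esym lp0)).
have := run_D_le_walk wp1 (ltnW s1); case hD: (sD _ t) => [d|] // _.
have [p wp hp] := run_realized hD.
exists p; split=> // q wq; rewrite hp.
have [q1 wq1 [sq1 lq1]] := walk_reduce w_gt0 wq.
have := run_D_le_walk wq1 (ltnW sq1); rewrite hD /ole /= -leNgt => h.
exact: le_trans h lq1.
Qed.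

Lemma run_D_shortest n x p : shortest e w x t p -> (size p <= n)%N ->
  sD (run w sched n x) t = Some (plen w x p).
Proof.
move=> sp hs; have := run_D_le_walk (proj1 sp) hs.
case hD: (sD _ t) => [d|] //; rewrite /ole /= -leNgt => hle.
have [q wq hq] := run_realized hD.
by congr Some; apply/le_anti; rewrite hle -hq (proj2 sp).
Qed.

Lemma shortest_le_cand n v u pv : shortest e w v t pv -> e v u ->
  ole (Some (plen w v pv)) (cand w v u (sD (run w sched n u) t)).
Proof.
move=> sv evu; rewrite /cand; case hD: (sD _ t) => [du|] //=.
have [p wp <-] := run_realized hD.
by rewrite /ole /= -leNgt addrC -w_sym; apply: (proj2 sv _ (walk_cons evu wp)).
Qed.

Lemma mid_stable n j v pv : shortest e w v t pv -> (maxhop e w v t <= n)%N ->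
  let ms := take j (sched n v) in let dv := Some (plen w v pv) in
  let cand_u u := cand w v u (sD (run w sched n u) t) in
  sNH (mid w sched n j v) t =
    [set u | if (u, t) \in ms then cand_u u == dv else u \in sNH (run w sched n v) t] /\
  sPH (mid w sched n j v) t =
    [set u | if (u, t) \in ms then
               (cand_u u != dv) && (osub (sD (run w sched n u) t) (w u v) == dv)
             else u \in sPH (run w sched n v) t].
Proof.
move=> sv hn ms dv cand_u.
have hD := run_D_shortest (n := n) sv (leq_trans (shortest_size_maxhop w_gt0 sv) hn).
have hc u : (u, t) \in ms -> ole dv (cand_u u).
  by move/mem_take; rewrite mem_sched; apply: shortest_le_cand.
by have [_ -> ->] := process_stable hD hc.
Qed.

Lemma cand_NH n v u pv : shortest e w v t pv -> (maxhop e w v t <= n)%N -> e v u ->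
  (cand w v u (sD (run w sched n u) t) == Some (plen w v pv)) = (u \in NHset e w v t).
Proof.
move=> sv hn evu; rewrite inE evu /=; apply/idP/pdecP => [|[p sp]].
  rewrite /cand; case hD: (sD _ t) => [du|] //= /eqP[hdu].
  have [p wp hp] := run_realized hD.
  exists p; split=> [|q wq]; first exact: walk_cons.
  by rewrite /= hp w_sym addrC hdu; apply: (proj2 sv).
have hp : (size p <= n)%N := ltnW (leq_trans (shortest_size_maxhop w_gt0 sp) hn).
rewrite (run_D_shortest (shortest_behead sp) hp) (shortest_len sv sp) /=.
by rewrite addrC w_sym.
Qed.

Lemma cand_PH n v u pv : shortest e w v t pv -> (DG e w <= n)%N -> e v u ->
  ((cand w v u (sD (run w sched n u) t) != Some (plen w v pv)) &&
   (osub (sD (run w sched n u) t) (w u v) == Some (plen w v pv)))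
  = (u \in PHset e w v t).
Proof.
move=> sv hn evu; have [pu su] := exists_shortest u.
have hu : (size pu <= n)%N.
  exact: leq_trans (shortest_size_maxhop w_gt0 su) (leq_trans (maxhop_le_DG e w u t) hn).
have euv : e u v by rewrite e_sym.
rewrite PHset_NHset // inE euv (sameP (pdecP _) (shortest_consP euv su sv)).
rewrite /cand (run_D_shortest su hu) /= !(inj_eq Some_inj) subr_eq [w u v + _]addrC.
case: (eqVneq (plen w u pu) (plen w v pv + w u v)) => [->|_]; last by rewrite andbF.
by rewrite andbT -addrA -[X in _ != X]addr0 (inj_eq (addrI _)) gt_eqF ?addr_gt0 ?w_gt0.
Qed.

Lemma run_NH n v : (maxhop e w v t <= n)%N -> sNH (run w sched n.+1 v) t = NHset e w v t.
Proof.
move=> hn; have [pv sv] := exists_shortest v.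
have /andP[/subsetP hNH _] := run_nbr n v t.
rewrite run_succ_mid; have [-> _] := mid_stable (size (sched n v)) sv hn.
apply/setP => u; rewrite inE take_size mem_sched.
case evu: (e v u); first exact: cand_NH.
by rewrite inE evu; apply/negbTE/negP => /hNH; rewrite inE evu.
Qed.

Lemma run_PH n v : (DG e w <= n)%N -> sPH (run w sched n.+1 v) t = PHset e w v t.
Proof.
move=> hn; have [pv sv] := exists_shortest v.
have /andP[_ /subsetP hPH] := run_nbr n v t.
rewrite run_succ_mid; have [_ ->] := mid_stable (size (sched n v)) sv
  (leq_trans (maxhop_le_DG e w v t) hn).
apply/setP => u; rewrite inE take_size mem_sched.
case evu: (e v u); first exact: cand_PH.
by rewrite inE evu; apply/negbTE/negP => /hPH; rewrite inE evu.
Qed.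

Lemma mid_NH n j v : ((maxhop e w v t).+1 <= n)%N ->
  sNH (mid w sched n j v) t = NHset e w v t.
Proof.
case: n => // n hn; have [pv sv] := exists_shortest v.
have [-> _] := mid_stable j sv (leqW hn).
apply/setP => u; rewrite inE; case: ifP => [/mem_take|_]; last by rewrite run_NH.
by rewrite mem_sched; apply: cand_NH => //; apply: leqW.
Qed.

Lemma mid_PH n j v : ((DG e w).+1 <= n)%N -> sPH (mid w sched n j v) t = PHset e w v t.
Proof.
case: n => // n hn; have [pv sv] := exists_shortest v.
have [_ ->] := mid_stable j sv (leqW (leq_trans (maxhop_le_DG e w v t) hn)).
apply/setP => u; rewrite inE; case: ifP => [/mem_take|_]; last by rewrite run_PH.
by rewrite mem_sched; apply: cand_PH => //; apply: leqW.
Qed.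

End Run.

Theorem lemma2 (R : realFieldType) (V : finType) (e : rel V) (w : V -> V -> R)
    (sched : nat -> V -> seq (V * V)) :
  symmetric e -> irreflexive e -> (forall x y, connect e x y) ->
  (forall u v, e u v -> 0 < w u v) -> (forall u v, w u v = w v u) ->
  (forall n v, perm_eq (sched n v) (msgs e v)) ->
  forall v t : V,
    (forall n j : nat, ((maxhop e w v t).+1 <= n)%N ->
       sNH (mid w sched n j v) t = NHset e w v t) /\
    (forall n j : nat, ((DG e w).+2 <= n)%N ->
       sPH (mid w sched n j v) t = PHset e w v t).
Proof.
move=> e_sym _ connected w_gt0 w_sym sched_perm v t; split=> n j hn.
  exact: mid_NH.
by apply: mid_PH => //; apply: ltnW.
Qed.
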